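(* Let $\mathcal M_1=((X_1,\mathcal N_1),\mathcal I,V_1)$ and $\mathcal M_2=((X_2,\mathcal N_2),\mathcal I,V_2)$ be neighbourhood models over the same index space and $(Z_{\mathcal N},Z_1,Z_2)$ a path preserving bisimulation between them. If $x_1\,Z_{\mathcal N}\,x_2$, then for every SLCS formula $\varphi$: $\mathcal M_1,x_1\models\varphi$ if and only if $\mathcal M_2,x_2\models\varphi$.
   Context: A filter on a set $X$ is a family $F\subseteq\mathcal P(X)$ closed under finite intersections and supersets, with $\emptyset\notin F$. A neighbourhood space $(X,\mathcal N)$ assigns to each $x\in X$ a filter $\mathcal N(x)$ on $X$ such that $x\in N$ for all $N\in\mathcal N(x)$; elements of $\mathcal N(x)$ are neighbourhoods of $x$. The closure of $A\subseteq X$ is $\mathcal C(A)=\{x\in X\mid \forall N\in\mathcal N(x): A\cap N\neq\emptyset\}$. Subsets $U,V$ are semi-separated if $\mathcal C(U)\cap V=U\cap\mathcal C(V)=\emptyset$; a set is connected if it is not the union of two non-empty semi-separated sets. A function $f:X_1\to X_2$ between neighbourhood spaces is continuous if for every $x\in X_1$ and every $N_2\in\mathcal N_2(f(x))$ we have $f^{-1}[N_2]\in\mathcal N_1(x)$. An index space $\mathcal I=(I,\mathcal N_I,\le,0)$ is a connected neighbourhood space $(I,\mathcal N_I)$ with a linear order $\le$ whose least element is $0$. A path on a neighbourhood space $X$ is a continuous map $p:I\to X$; we write $p:x\rightsquigarrow\infty$ if $p(0)=x$. A neighbourhood model $\mathcal M=((X,\mathcal N),\mathcal I,V)$ consists of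 a neighbourhood space, an index space and a valuation $V:X\to\mathcal P(\mathsf{P})$ for a fixed countable set $\mathsf P$ of propositional atoms; paths on $\mathcal M$ are paths with respect to $\mathcal I$. SLCS formulas: $\varphi::=a\mid\top\mid\neg\varphi\mid\varphi\wedge\varphi\mid\mathcal N\varphi\mid\varphi\,\mathcal R\,\varphi\mid\varphi\,\mathcal P\,\varphi$ with $a\in\mathsf P$. Semantics: $\mathcal M,x\models a$ iff $a\in V(x)$; Booleans as usual; $\mathcal M,x\models\mathcal N\varphi$ iff $x\in\mathcal C(\{y\mid\mathcal M,y\models\varphi\})$; $\mathcal M,x\models\varphi\,\mathcal R\,\psi$ iff there are a path $p$ and $n\in I$ with $p(n)=x$, $\mathcal M,p(0)\models\psi$ and $\mathcal M,p(i)\models\varphi$ for all $0<i\le n$; $\mathcal M,x\models\varphi\,\mathcal P\,\psi$ iff there are a path $p$ with $p(0)=x$ and $n\in I$ with $\mathcal M,p(n)\models\psi$ and $\mathcal M,p(i)\models\varphi$ for all $0\le i<n$. A relation $Z\subseteq X_1\times X_2$ between neighbourhood models satisfies the neighbourhood bisimulation conditions at a pair $x_1\,Z\,x_2$ if: (atomic) $V_1(x_1)=V_2(x_2)$; (forth) for every $N_2\in\mathcal N_2(x_2)$ there is $N_1\in\mathcal N_1(x_1)$ such that every $y_1\in N_1$ has some $y_2\in N_2$ with $y_1Zy_2$; (back) for every $N_1\in\mathcal N_1(x_1)$ there is $N_2\in\mathcal N_2(x_2)$ such that every $y_2\in N_2$ has some $y_1\in N_1$ with $y_1Zy_2$. $Z$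 is a neighbourhood bisimulation if these hold at every related pair. Path preserving bisimulation: let $\mathcal M_1,\mathcal M_2$ be neighbourhood models over the same index space $\mathcal I$, with $\mathcal P_1,\mathcal P_2$ their sets of paths. A triple $(Z_{\mathcal N},Z_1,Z_2)$ with $\emptyset\neq Z_{\mathcal N}\subseteq X_1\times X_2$, $Z_1\subseteq(\mathcal P_1\times I)\times(\mathcal P_2\times I)$, $Z_2\subseteq(\mathcal P_2\times I)\times(\mathcal P_1\times I)$ is a path preserving bisimulation if for all $x_1,x_2$, paths $p,q$ and indices: (1) $Z_{\mathcal N}$ is a neighbourhood bisimulation; (2) if $x_1Z_{\mathcal N}x_2$, $p:x_1\rightsquigarrow\infty$, $n\neq0$, then there are $q:x_2\rightsquigarrow\infty$ and $m$ with $p(n)Z_{\mathcal N}q(m)$ and $(p,n)Z_1(q,m)$; (3) if $x_1Z_{\mathcal N}x_2$, $p$ a path with $p(n)=x_1$, $n\neq0$, then there are a path $q$ and $m$ with $q(m)=x_2$, $p(0)Z_{\mathcal N}q(0)$ and $(p,n)Z_1(q,m)$; (4) if $(p,n)Z_1(q,m)$ and $0<k_q<m$, then there is $k_p$ with $0<k_p<n$ and $p(k_p)Z_{\mathcal N}q(k_q)$; (5) if $x_1Z_{\mathcal N}x_2$, $q:x_2\rightsquigarrow\infty$, $m\neq0$, then there are $p:x_1\rightsquigarrow\infty$ and $n$ with $p(n)Z_{\mathcal N}q(m)$ and $(q,m)Z_2(p,n)$; (6) if $x_1Z_{\mathcal N}x_2$, $q$ a path with $q(m)=x_2$, $m\neq0$,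 then there are a path $p$ and $n$ with $p(n)=x_1$, $p(0)Z_{\mathcal N}q(0)$ and $(q,m)Z_2(p,n)$; (7) if $(q,m)Z_2(p,n)$ and $0<k_p<n$, then there is $k_q$ with $0<k_q<m$ and $p(k_p)Z_{\mathcal N}q(k_q)$. *)

Set Implicit Arguments.

Section Nbhd.
Variable X : Type.

Definition is_filter (F : (X -> Prop) -> Prop) : Prop :=
  F (fun _ => True) /\
  (forall A B, F A -> F B -> F (fun x => A x /\ B x)) /\
  (forall A B, F A -> (forall x, A x -> B x) -> F B) /\
  ~ F (fun _ => False).

Definition nbhd_space (N : X -> (X -> Prop) -> Prop) : Prop :=
  forall x, is_filter (N x) /\ (forall A, N x A -> A x).

Definition closure (N : X -> (X -> Prop) -> Prop) (A : X -> Prop) : X -> Prop :=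
  fun x => forall M, N x M -> exists y, A y /\ M y.

Definition semi_separated (N : X -> (X -> Prop) -> Prop) (U W : X -> Prop) : Prop :=
  (forall x, ~ (closure N U x /\ W x)) /\ (forall x, ~ (U x /\ closure N W x)).

Definition connected (N : X -> (X -> Prop) -> Prop) (A : X -> Prop) : Prop :=
  ~ exists U W : X -> Prop,
      (forall x, A x <-> (U x \/ W x)) /\
      (exists u, U u) /\ (exists w, W w) /\ semi_separated N U W.
End Nbhd.

Definition continuous {X1 X2 : Type} (N1 : X1 -> (X1 -> Prop) -> Prop)
  (N2 : X2 -> (X2 -> Prop) -> Prop) (f : X1 -> X2) : Prop :=
  forall x M2, N2 (f x) M2 -> N1 x (fun y => M2 (f y)).

Definition index_space {I : Type} (NI : I -> (I -> Prop) -> Prop)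
  (le : I -> I -> Prop) (i0 : I) : Prop :=
  nbhd_space NI /\ connected NI (fun _ => True) /\
  (forall i, le i i) /\
  (forall i j, le i j -> le j i -> i = j) /\
  (forall i j k, le i j -> le j k -> le i k) /\
  (forall i j, le i j \/ le j i) /\
  (forall i, le i0 i).

Inductive form : Type :=
| FAtom : nat -> form
| FTop : form
| FNot : form -> form
| FAnd : form -> form -> form
| FNear : form -> form
| FReach : form -> form -> form
| FPass : form -> form -> form.

Section Sem.
Variables (X I : Type) (N : X -> (X -> Prop) -> Prop)
  (NI : I -> (I -> Prop) -> Prop) (le : I -> I -> Prop) (i0 : I)
  (V : X -> nat -> Prop).

Definition lt (i j : I) : Prop := le i j /\ i <> j.

Definition is_path (p : I -> X) : Prop := continuous NI N p.

Fixpoint sat (phi : form) (x : X) : Prop :=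
  match phi with
  | FAtom a => V x a
  | FTop => True
  | FNot f => ~ sat f x
  | FAnd f g => sat f x /\ sat g x
  | FNear f => closure N (sat f) x
  | FReach f g => exists p n, is_path p /\ p n = x /\ sat g (p i0) /\
                   (forall i, lt i0 i -> le i n -> sat f (p i))
  | FPass f g => exists p n, is_path p /\ p i0 = x /\ sat g (p n) /\
                   (forall i, le i0 i -> lt i n -> sat f (p i))
  end.
End Sem.

Definition nbhd_bisim_at {X1 X2 : Type} (N1 : X1 -> (X1 -> Prop) -> Prop)
  (N2 : X2 -> (X2 -> Prop) -> Prop) (V1 : X1 -> nat -> Prop) (V2 : X2 -> nat -> Prop)
  (Z : X1 -> X2 -> Prop) (x1 : X1) (x2 : X2) : Prop :=
  (forall a, V1 x1 a <-> V2 x2 a) /\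
  (forall M2, N2 x2 M2 -> exists M1, N1 x1 M1 /\
      forall y1, M1 y1 -> exists y2, M2 y2 /\ Z y1 y2) /\
  (forall M1, N1 x1 M1 -> exists M2, N2 x2 M2 /\
      forall y2, M2 y2 -> exists y1, M1 y1 /\ Z y1 y2).

Definition nbhd_bisim {X1 X2 : Type} (N1 : X1 -> (X1 -> Prop) -> Prop)
  (N2 : X2 -> (X2 -> Prop) -> Prop) (V1 : X1 -> nat -> Prop) (V2 : X2 -> nat -> Prop)
  (Z : X1 -> X2 -> Prop) : Prop :=
  forall x1 x2, Z x1 x2 -> nbhd_bisim_at N1 N2 V1 V2 Z x1 x2.

(* Path preserving bisimulation (Z_N, Z1, Z2). Z1 p n q m encodes (p,n) Z1 (q,m),
   Z2 q m p n encodes (q,m) Z2 (p,n); they relate paths only. *)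
Definition path_pres_bisim {X1 X2 I : Type}
  (N1 : X1 -> (X1 -> Prop) -> Prop) (N2 : X2 -> (X2 -> Prop) -> Prop)
  (NI : I -> (I -> Prop) -> Prop) (le : I -> I -> Prop) (i0 : I)
  (V1 : X1 -> nat -> Prop) (V2 : X2 -> nat -> Prop)
  (ZN : X1 -> X2 -> Prop)
  (Z1 : (I -> X1) -> I -> (I -> X2) -> I -> Prop)
  (Z2 : (I -> X2) -> I -> (I -> X1) -> I -> Prop) : Prop :=
  let P1 := is_path N1 NI in
  let P2 := is_path N2 NI in
  (exists x1 x2, ZN x1 x2) /\
  (forall p n q m, Z1 p n q m -> P1 p /\ P2 q) /\
  (forall q m p n, Z2 q m p n -> P2 q /\ P1 p) /\
  nbhd_bisim N1 N2 V1 V2 ZN /\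
  (forall x1 x2 p n, ZN x1 x2 -> P1 p -> p i0 = x1 -> n <> i0 ->
              exists q m, P2 q /\ q i0 = x2 /\ ZN (p n) (q m) /\ Z1 p n q m) /\
  (forall x1 x2 p n, ZN x1 x2 -> P1 p -> p n = x1 -> n <> i0 ->
              exists q m, P2 q /\ q m = x2 /\ ZN (p i0) (q i0) /\ Z1 p n q m) /\
  (forall p n q m kq, Z1 p n q m -> lt le i0 kq -> lt le kq m ->
              exists kp, lt le i0 kp /\ lt le kp n /\ ZN (p kp) (q kq)) /\
  (forall x1 x2 q m, ZN x1 x2 -> P2 q -> q i0 = x2 -> m <> i0 ->
              exists p n, P1 p /\ p i0 = x1 /\ ZN (p n) (q m) /\ Z2 q m p n) /\
  (forall x1 x2 q m, ZN x1 x2 -> P2 q -> q m = x2 -> m <> i0 ->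
              exists p n, P1 p /\ p n = x1 /\ ZN (p i0) (q i0) /\ Z2 q m p n) /\
  (forall q m p n kp, Z2 q m p n -> lt le i0 kp -> lt le kp n ->
              exists kq, lt le i0 kq /\ lt le kq m /\ ZN (p kp) (q kq)).

From Stdlib Require Import Classical.

Set Implicit Arguments.

(* A path preserving bisimulation (Z_N, Z_1, Z_2) packs two symmetric halves:
   clauses (1)-forth and (2)-(4) say that Z_N, together with the path relation
   Z_1, lets every neighbourhood and every path of M_1 be simulated in M_2;
   clauses (1)-back and (5)-(7) say the same for the converse of Z_N with Z_2.  The degenerate paths of length 0 are matched by
   constant paths, which are continuous in any neighbourhood space. *)

(* Constant maps from a neighbourhood space into a neighbourhood space are
   continuous: every neighbourhood of the value pulls back to the whole space. *)
Lemma const_path {X I : Type} (N : X -> (X -> Prop) -> Prop)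
  (NI : I -> (I -> Prop) -> Prop) (x : X) :
  nbhd_space N -> nbhd_space NI -> is_path N NI (fun _ => x).
Proof.
  intros HN HNI j M HM.
  destruct (HNI j) as [[Htop [_ [Hup _]]] _].
  apply Hup with (fun _ => True); [exact Htop|].
  intros _ _. destruct (HN x) as [_ Hin]. exact (Hin M HM).
Qed.

Lemma lt_le_absurd {I : Type} (le : I -> I -> Prop) (a b : I) :
  (forall i j, le i j -> le j i -> i = j) -> lt le a b -> le b a -> False.
Proof. intros Hanti [Hab Hne] Hba. exact (Hne (Hanti a b Hab Hba)). Qed.

Section Simulation.
Variables (XA XB I : Type) (NA : XA -> (XA -> Prop) -> Prop)
  (NB : XB -> (XB -> Prop) -> Prop) (NI : I -> (I -> Prop) -> Prop)
  (le : I -> I -> Prop) (i0 : I).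

Definition nbhd_forth (Z : XA -> XB -> Prop) : Prop :=
  forall x y, Z x y -> forall MB, NB y MB -> exists MA, NA x MA /\
    forall a, MA a -> exists b, MB b /\ Z a b.

(* One half of a path preserving bisimulation: paths from (resp. to) related
   points are matched by paths from (resp. to) related points, and the matching
   ZP guarantees that every interior point of the simulating path corresponds
   to an interior point of the simulated one. *)
Record path_sim (Z : XA -> XB -> Prop)
  (ZP : (I -> XA) -> I -> (I -> XB) -> I -> Prop) : Prop := {
  ps_from : forall {x y p n}, Z x y -> is_path NA NI p -> p i0 = x -> n <> i0 ->
    exists q m, is_path NB NI q /\ q i0 = y /\ Z (p n) (q m) /\ ZP p n q m;
  ps_to : forall {x y p n}, Z x y -> is_path NA NI p -> p n = x -> n <> i0 ->
    exists q m, is_path NB NI q /\ q m = y /\ Z (p i0) (q i0) /\ ZP p n q m;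
  ps_interior : forall {p n q m k}, ZP p n q m -> lt le i0 k -> lt le k m ->
    exists k', lt le i0 k' /\ lt le k' n /\ Z (p k') (q k) }.

Definition reach {X : Type} (N : X -> (X -> Prop) -> Prop) (F G : X -> Prop)
  (x : X) : Prop :=
  exists p n, is_path N NI p /\ p n = x /\ G (p i0) /\
    (forall i, lt le i0 i -> le i n -> F (p i)).

Definition pass {X : Type} (N : X -> (X -> Prop) -> Prop) (F G : X -> Prop)
  (x : X) : Prop :=
  exists p n, is_path N NI p /\ p i0 = x /\ G (p n) /\
    (forall i, le i0 i -> lt le i n -> F (p i)).

Variables (Z : XA -> XB -> Prop) (FA GA : XA -> Prop) (FB GB : XB -> Prop).
Hypothesis F_transfer : forall a b, Z a b -> FA a -> FB b.
Hypothesis G_transfer : forall a b, Z a b -> GA a -> GB b.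

Lemma closure_transfer x y :
  nbhd_forth Z -> Z x y -> closure NA FA x -> closure NB FB y.
Proof.
  intros Hforth Hxy Hx MB HMB.
  destruct (Hforth x y Hxy MB HMB) as [MA [HMA Hmatch]].
  destruct (Hx MA HMA) as [a [HFa HMa]].
  destruct (Hmatch a HMa) as [b [HMb Hab]].
  exists b. split; [exact (F_transfer Hab HFa) | exact HMb].
Qed.

Hypothesis NB_space : nbhd_space NB.
Hypothesis NI_space : nbhd_space NI.
Hypothesis le_refl : forall i, le i i.
Hypothesis le_antisym : forall i j, le i j -> le j i -> i = j.
Hypothesis i0_least : forall i, le i0 i.

(* Reachability (the modality R) is transported along a path simulation:
   a path ending at x is matched by a path ending at y whose interior points
   are related to interior points of the original path. *)
Lemma reach_transfer ZP x y :
  path_sim Z ZP -> Z x y -> reach NA FA GA x -> reach NB FB GB y.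
Proof.
  intros Hsim Hxy [p [n [Hp [Hpn [HG HF]]]]].
  destruct (classic (n = i0)) as [-> | Hn].
  - exists (fun _ => y), i0. split; [exact (const_path _ NB_space NI_space)|].
    split; [reflexivity|]. split.
    + apply (G_transfer Hxy). rewrite <- Hpn. exact HG.
    + intros i Hi Hi0. destruct (lt_le_absurd le_antisym Hi Hi0).
  - destruct (ps_to Hsim Hxy Hp Hpn Hn) as [q [m [Hq [Hqm [H0 HZP]]]]].
    exists q, m. split; [exact Hq|]. split; [exact Hqm|].
    split; [exact (G_transfer H0 HG)|].
    intros i Hi Him. destruct (classic (i = m)) as [-> | Hne].
    + rewrite Hqm. apply (F_transfer Hxy). rewrite <- Hpn.
      apply HF; [split; auto | apply le_refl].
    + destruct (ps_interior Hsim HZP Hi (conj Him Hne)) as [k [Hk [Hkn Hk']]].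
      exact (F_transfer Hk' (HF k Hk (proj1 Hkn))).
Qed.

Lemma pass_transfer ZP x y :
  path_sim Z ZP -> Z x y -> pass NA FA GA x -> pass NB FB GB y.
Proof.
  intros Hsim Hxy [p [n [Hp [Hp0 [HG HF]]]]].
  destruct (classic (n = i0)) as [-> | Hn].
  - exists (fun _ => y), i0. split; [exact (const_path _ NB_space NI_space)|].
    split; [reflexivity|]. split.
    + apply (G_transfer Hxy). rewrite <- Hp0. exact HG.
    + intros i Hi Hi0. destruct (lt_le_absurd le_antisym Hi0 Hi).
  - destruct (ps_from Hsim Hxy Hp Hp0 Hn) as [q [m [Hq [Hq0 [Hnm HZP]]]]].
    exists q, m. split; [exact Hq|]. split; [exact Hq0|].
    split; [exact (G_transfer Hnm HG)|].
    intros i Hi Him. destruct (classic (i = i0)) as [-> | Hne].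
    + rewrite Hq0. apply (F_transfer Hxy). rewrite <- Hp0.
      apply HF; [apply le_refl | split; auto].
    + assert (Hi' : lt le i0 i) by (split; auto).
      destruct (ps_interior Hsim HZP Hi' Him) as [k [Hk [Hkn Hk']]].
      exact (F_transfer Hk' (HF k (proj1 Hk) Hkn)).
Qed.

End Simulation.

Lemma sat_invariant (X1 X2 I : Type)
  (N1 : X1 -> (X1 -> Prop) -> Prop) (N2 : X2 -> (X2 -> Prop) -> Prop)
  (NI : I -> (I -> Prop) -> Prop) (le : I -> I -> Prop) (i0 : I)
  (V1 : X1 -> nat -> Prop) (V2 : X2 -> nat -> Prop) (Z : X1 -> X2 -> Prop)
  (Z12 : (I -> X1) -> I -> (I -> X2) -> I -> Prop)
  (Z21 : (I -> X2) -> I -> (I -> X1) -> I -> Prop) :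
  nbhd_space N1 -> nbhd_space N2 -> nbhd_space NI ->
  (forall i, le i i) -> (forall i j, le i j -> le j i -> i = j) ->
  (forall i, le i0 i) ->
  (forall x1 x2, Z x1 x2 -> forall a, V1 x1 a <-> V2 x2 a) ->
  nbhd_forth N1 N2 Z -> nbhd_forth N2 N1 (fun x2 x1 => Z x1 x2) ->
  path_sim N1 N2 NI le i0 Z Z12 ->
  path_sim N2 N1 NI le i0 (fun x2 x1 => Z x1 x2) Z21 ->
  forall phi x1 x2, Z x1 x2 ->
    sat N1 NI le i0 V1 phi x1 <-> sat N2 NI le i0 V2 phi x2.
Proof.
  intros HN1 HN2 HNI Hrefl Hanti Hleast Hatoms Hf Hb Hs12 Hs21 phi.
  induction phi as [a| |f IH|f IHf g IHg|f IH|f IHf g IHg|f IHf g IHg];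
    intros x1 x2 Hx; simpl.
  - exact (Hatoms x1 x2 Hx a).
  - tauto.
  - rewrite (IH x1 x2 Hx). tauto.
  - rewrite (IHf x1 x2 Hx), (IHg x1 x2 Hx). tauto.
  - split; eapply closure_transfer; eauto; intros a b Hab; apply (IH _ _ Hab).
  - split; [eapply reach_transfer with (ZP := Z12)
           | eapply reach_transfer with (ZP := Z21)]; eauto;
      intros a b Hab; apply (IHf _ _ Hab) || apply (IHg _ _ Hab).
  - split; [eapply pass_transfer with (ZP := Z12)
           | eapply pass_transfer with (ZP := Z21)]; eauto;
      intros a b Hab; apply (IHf _ _ Hab) || apply (IHg _ _ Hab).
Qed.

(* Theorem 17: a path preserving bisimulation consists of the two halves
   required by [sat_invariant]. *)
Theorem theorem17 (X1 X2 I : Type)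
  (N1 : X1 -> (X1 -> Prop) -> Prop) (N2 : X2 -> (X2 -> Prop) -> Prop)
  (NI : I -> (I -> Prop) -> Prop) (le : I -> I -> Prop) (i0 : I)
  (V1 : X1 -> nat -> Prop) (V2 : X2 -> nat -> Prop)
  (ZN : X1 -> X2 -> Prop)
  (Z1 : (I -> X1) -> I -> (I -> X2) -> I -> Prop)
  (Z2 : (I -> X2) -> I -> (I -> X1) -> I -> Prop) :
  nbhd_space N1 -> nbhd_space N2 -> index_space NI le i0 ->
  path_pres_bisim N1 N2 NI le i0 V1 V2 ZN Z1 Z2 ->
  forall (x1 : X1) (x2 : X2), ZN x1 x2 ->
  forall phi : form,
    sat N1 NI le i0 V1 phi x1 <-> sat N2 NI le i0 V2 phi x2.
Proof.
  intros HN1 HN2 [HNI [_ [Hrefl [Hanti [_ [_ Hleast]]]]]]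
    [_ [_ [_ [HZ [H2 [H3 [H4 [H5 [H6 H7]]]]]]]]] x1 x2 Hx phi.
  apply sat_invariant with (Z := ZN) (Z12 := Z1) (Z21 := Z2); auto.
  - intros y1 y2 Hy. exact (proj1 (HZ y1 y2 Hy)).
  - intros y1 y2 Hy. exact (proj1 (proj2 (HZ y1 y2 Hy))).
  - intros y2 y1 Hy. exact (proj2 (proj2 (HZ y1 y2 Hy))).
  - split; assumption.
  - split.
    + intros y2 y1 q m Hy. exact (H5 y1 y2 q m Hy).
    + intros y2 y1 q m Hy. exact (H6 y1 y2 q m Hy).
    + exact H7.
Qed.
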